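(* Suppose the e-values are valid ($\mathbb{E}[e_t\mid\mathcal{F}_{t-1}]\le1$ a.s. whenever $\theta_t=0$), and that the null e-values $\{e_j:\theta_j=0\}$ are mutually independent and independent of the non-null e-values $\{e_j:\theta_j=1\}$, each null e-value satisfying $\mathbb{E}[e_j]\le 1$. Suppose the testing levels are of the form $\alpha_t=f_t(\delta_1,\dots,\delta_{t-1})$ for deterministic functions $f_t:\{0,1\}^{t-1}\to[0,\infty)$ that are coordinatewise nondecreasing. Let $$\mathrm{FDP}^*_{\mathrm{e\text{-}ind}}(t)=\frac{\sum_{j\in\mathcal{H}_0(t)}\alpha_j}{R_t\vee1}.$$ Then for every $t\ge1$: if $\mathbb{E}[\mathrm{FDP}^*_{\mathrm{e\text{-}ind}}(t)]\le\alpha$, then $\mathrm{FDR}(t)\le\alpha$.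
   Context: Let $\alpha\in(0,1)$ be a target level. Hypotheses are indexed by $t=1,2,\dots$; $\theta_t\in\{0,1\}$ is a fixed (non-random) indicator with $\theta_t=0$ iff the $t$-th null hypothesis is true. $e_1,e_2,\dots$ are nonnegative random variables (e-values). Testing levels $\alpha_1,\alpha_2,\dots$ are nonnegative random variables and the decisions are $\delta_t=\mathbb{1}\{e_t\ge 1/\alpha_t\}$ (with $\delta_t=0$ when $\alpha_t=0$). Let $\mathcal{F}_t=\sigma(\delta_1,\dots,\delta_t)$, $\mathcal{F}_0$ trivial. $R_t=\sum_{j=1}^t\delta_j$, $R_0=0$. $\mathcal{H}_0(t)=\{j\le t:\theta_j=0\}$. $\mathrm{FDR}(t)=\mathbb{E}\big[\sum_{j\in\mathcal{H}_0(t)}\delta_j/(R_t\vee 1)\big]$. *)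

From HB Require Import structures.
From mathcomp Require Import all_boot all_order all_algebra.
From mathcomp Require Import all_classical all_reals all_analysis.
Set Implicit Arguments. Unset Strict Implicit. Unset Printing Implicit Defensive.
Import Order.TTheory GRing.Theory Num.Theory.
Local Open Scope classical_set_scope.
Local Open Scope ring_scope.

Section OnlineEBH.
Variables (R : realType).

Definition dec_of (a x : R) : bool := (0 < a) && (a^-1 <= x).

Variables (T : Type) (f : nat -> seq bool -> R) (e : nat -> T -> R).

(* decs n w = [:: delta_1 w; ...; delta_n w], where
   alpha_t = f t [:: delta_1; ...; delta_(t-1)] and delta_t = dec_of alpha_t (e t) *)
Fixpoint decs (n : nat) (w : T) : seq bool :=
  match n with
  | 0 => [::]
  | n'.+1 => let s := decs n' w in rcons s (dec_of (f n'.+1 s) (e n'.+1 w))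
  end.

Definition alpha_lvl (t : nat) (w : T) : R := f t (decs t.-1 w).
Definition delta (t : nat) (w : T) : bool := nth false (decs t w) t.-1.
Definition nrej (t : nat) (w : T) : nat := \sum_(1 <= j < t.+1) delta j w.

Variable theta : nat -> bool. (* theta j = true iff theta_j = 1 (non-null) *)

Definition FDP (t : nat) (w : T) : R :=
  (\sum_(1 <= j < t.+1 | ~~ theta j) (delta j w)%:R) / Num.max (nrej t w)%:R 1.

Definition FDPstar (t : nat) (w : T) : R :=
  (\sum_(1 <= j < t.+1 | ~~ theta j) alpha_lvl j w) / Num.max (nrej t w)%:R 1.
End OnlineEBH.

Definition levels_ok (R : realType) (f : nat -> seq bool -> R) : Prop :=
  (forall t s, size s = t.-1 -> 0 <= f t s) /\
  (forall t s1 s2, size s1 = t.-1 -> size s2 = t.-1 ->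
     (forall i, (i < t.-1)%N -> nth false s1 i ==> nth false s2 i) ->
     f t s1 <= f t s2).

Local Open Scope ereal_scope.

(* Validity: E[e_t | F_(t-1)] <= 1 a.s. for null t, with
   F_(t-1) = sigma(delta_1,...,delta_(t-1)); the events of F_(t-1) are exactly
   the sets {w | (delta_1 w,...,delta_(t-1) w) \in S}. *)
Definition valid_evalues (d : measure_display) (T : measurableType d)
  (R : realType) (P : probability T R) (f : nat -> seq bool -> R)
  (e : nat -> T -> R) (theta : nat -> bool) : Prop :=
  forall t, (1 <= t)%N -> ~~ theta t ->
    forall S : set (seq bool),
      \int[P]_(w in [set w | S (decs f e t.-1 w)]) (e t w)%:E
        <= P [set w | S (decs f e t.-1 w)].

(* The null e-values are mutually independent and independent of the family of
   non-null e-values (checked on the generating pi-system of finite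
   rectangles). *)
Definition null_indep (d : measure_display) (T : measurableType d)
  (R : realType) (P : probability T R) (e : nat -> T -> R)
  (theta : nat -> bool) : Prop :=
  forall (J0 J1 : seq nat) (B : nat -> set R),
    uniq J0 -> all (fun j => ~~ theta j) J0 -> all theta J1 ->
    (forall j, measurable (B j)) ->
    P (\bigcap_(j in [set j | j \in J0 ++ J1]) (e j @^-1` B j)) =
      (\prod_(j <- J0) P (e j @^-1` B j)) *
      P (\bigcap_(j in [set j | j \in J1]) (e j @^-1` B j)).

From HB Require Import structures.
From mathcomp Require Import all_boot all_order all_algebra.
From mathcomp Require Import all_classical all_reals all_analysis.
Import Order.TTheory GRing.Theory Num.Theory measurable_realfun.
Set Implicit Arguments. Unset Strict Implicit. Unset Printing Implicit Defensive.
Local Open Scope classical_set_scope.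
Local Open Scope ring_scope.

(* For a null j, delta_j <= e_j alpha_j.  On {delta_j = 1} the decisions coincide
   with those of the process in which the j-th decision is forced to be a
   rejection; that process is a function of the e_k, k <> j, only, so it is
   independent of e_j and E[e_j] <= 1 gives
     E[delta_j / (R_t v 1)] <= E[alpha_j / (R'_t v 1)],
   R'_t counting the rejections of the forced process.  Since the levels are
   nondecreasing the forced process rejects at least as often, R'_t >= R_t,
   while its first j - 1 decisions, hence alpha_j, are unchanged.  Summing over
   the nulls j <= t gives FDR(t) <= E[FDP*(t)]. *)

Definition bitwise_le (n : nat) (s1 s2 : seq bool) : Prop :=
  forall i, (i < n)%N -> nth false s1 i ==> nth false s2 i.

Lemma count_bitwise_le n (s1 s2 : seq bool) :
  size s1 = n -> size s2 = n -> bitwise_le n s1 s2 -> (count id s1 <= count id s2)%N.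
Proof.
elim: n s1 s2 => [|n IH] [|b1 s1] [|b2 s2] //= [s1n] [s2n] le12.
apply: leq_add; first by move: (le12 0%N isT) => /=; case: b1 {le12}; case: b2.
by apply: IH => // i; apply: (le12 i.+1).
Qed.

Section decisions.
Variables (R : realType) (T : Type) (f : nat -> seq bool -> R) (e : nat -> T -> R).

Lemma size_decs n w : size (decs f e n w) = n.
Proof. by elim: n => //= n IH; rewrite size_rcons IH. Qed.

Lemma take_decs k n w : (k <= n)%N -> take k (decs f e n w) = decs f e k w.
Proof.
elim: n => [|n IH]; first by rewrite leqn0 => /eqP ->.
rewrite leq_eqVlt => /orP [/eqP ->|]; first by rewrite take_oversize // size_decs.
by rewrite ltnS => kn /=; rewrite -cats1 takel_cat ?size_decs // IH.
Qed.

Lemma deltaE k w : (0 < k)%N -> delta f e k w = dec_of (alpha_lvl f e k w) (e k w).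
Proof.
by case: k => // k _; rewrite /delta /alpha_lvl /= nth_rcons size_decs ltnn eqxx.
Qed.

Lemma nth_decs k n w : (0 < k <= n)%N -> nth false (decs f e n w) k.-1 = delta f e k w.
Proof.
case: k => // k /andP [_ kn].
by rewrite /delta -(nth_take _ (ltnSn k)) take_decs.
Qed.

Lemma alpha_lvl_decs k n w : (0 < k <= n)%N ->
  alpha_lvl f e k w = f k (take k.-1 (decs f e n w)).
Proof.
by case: k => // k /andP [_ kn]; rewrite /alpha_lvl take_decs // ltnW.
Qed.

Lemma nrej_count t w : nrej f e t w = count id (decs f e t w).
Proof.
elim: t => [|t IH]; first by rewrite /nrej big_geq.
rewrite /nrej big_nat_recr //= -/(nrej f e t w) IH /= -cats1 count_cat /= addn0.
by rewrite /delta /= nth_rcons size_decs ltnn eqxx.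
Qed.

Lemma decs_eqP n w x : size x = n ->
  decs f e n w = x <->
  forall k, (0 < k <= n)%N -> dec_of (f k (take k.-1 x)) (e k w) = nth false x k.-1.
Proof.
move=> sx; split.
  move=> <- k kn; rewrite nth_decs // take_decs ?deltaE //; first by case/andP: kn.
  by case/andP: kn => _; apply: leq_trans (leq_pred k).
elim: n x sx => [|n IH] x sx dx; first by case: x sx dx.
move: sx dx; case/lastP: x => [//|x b]; rewrite size_rcons => -[sx] dx /=.
have -> : decs f e n w = x.
  apply: IH => // k /andP [k0 kn].
  have := dx k; rewrite k0 (leq_trans kn) // => /(_ isT).
  by rewrite nth_rcons sx -cats1 takel_cat ?sx; case: k k0 kn => // k _ kn; rewrite ?kn // ltnW.
congr rcons; have := dx n.+1; rewrite leqnn => /(_ isT).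
by rewrite nth_rcons sx ltnn eqxx -cats1 takel_cat ?sx // -sx take_size.
Qed.
End decisions.

Lemma dec_of_le (R : realType) (a a' x : R) : a <= a' -> dec_of a x ==> dec_of a' x.
Proof.
rewrite /dec_of => aa'; apply/implyP => /andP [a0 ax].
have a'0 : 0 < a' by exact: lt_le_trans a0 aa'.
by rewrite a'0 /=; apply: le_trans ax; rewrite lef_pV2 ?posrE.
Qed.

Lemma dec_of_mul_ge1 (R : realType) (a x : R) : dec_of a x -> 1 <= x * a.
Proof.
by case/andP => a0 ax; rewrite -(mulVf (lt0r_neq0 a0)) ler_wpM2r // ltW.
Qed.

Section two_processes.
Variables (R : realType) (T : Type) (w : T).
Variables (f f' : nat -> seq bool -> R) (e e' : nat -> T -> R).

Lemma decs_bitwise_le n :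
  (forall k s s', size s = k.-1 -> size s' = k.-1 -> bitwise_le k.-1 s s' ->
     dec_of (f k s) (e k w) ==> dec_of (f' k s') (e' k w)) ->
  bitwise_le n (decs f e n w) (decs f' e' n w).
Proof.
move=> le_step; elim: n => // n IH i; rewrite ltnS /= !nth_rcons !size_decs.
rewrite leq_eqVlt => /orP [/eqP ->|lt_in]; last by rewrite lt_in; exact: IH.
by rewrite ltnn eqxx; apply: le_step; rewrite ?size_decs.
Qed.

Lemma eq_decs n :
  (forall k, (0 < k <= n)%N ->
     dec_of (f k (decs f e k.-1 w)) (e k w) = dec_of (f' k (decs f e k.-1 w)) (e' k w)) ->
  decs f e n w = decs f' e' n w.
Proof.
elim: n => // n IH eq_step /=.
have <- : decs f e n w = decs f' e' n w.
  by apply: IH => k /andP [k0 kn]; apply: eq_step; rewrite k0 ltnW.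
by rewrite (eq_step n.+1) // leqnn.
Qed.
End two_processes.

Lemma measurable_dec_of (R : realType) (a : R) (b : bool) :
  measurable [set y : R | dec_of a y = b].
Proof.
have -> : [set y : R | dec_of a y = b] =
    if 0 < a then (if b then `[a^-1, +oo[%classic else ~` `[a^-1, +oo[%classic) else
    (if b then set0 else setT).
  apply/seteqP; split => y /=; rewrite /dec_of;
    by case: (0 < a); case: b => //=; rewrite in_itv /= andbT; case: (a^-1 <= y).
by case: (0 < a); case: b => //; exact: measurableC.
Qed.

Section measurable_decisions.
Context d (T : measurableType d) (R : realType).
Variables (f : nat -> seq bool -> R) (e : nat -> T -> R).
Hypothesis me : forall k, measurable_fun setT (e k).

Lemma measurable_decs_eq n x : measurable [set w | decs f e n w = x].
Proof.
have [sx|sx] := eqVneq (size x) n; last first.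
  rewrite (_ : [set w | _] = set0) //; apply/seteqP; split => w //= dx.
  by move: sx; rewrite -dx size_decs eqxx.
rewrite (_ : [set w | _] = \bigcap_(k in [set k | (0 < k <= n)%N])
   e k @^-1` [set y | dec_of (f k (take k.-1 x)) y = nth false x k.-1]).
  apply: bigcap_measurableType => k _.
  by rewrite -[_ @^-1` _]setTI; apply: me => //; exact: measurable_dec_of.
by apply/seteqP; split => w /=; move/(decs_eqP _ _ w sx).
Qed.

Lemma decs_sum_tuple (g : seq bool -> R) n w :
  g (decs f e n w) = \sum_(x : n.-tuple bool) g x * \1_[set w | decs f e n w = tval x] w.
Proof.
rewrite (bigD1 (@Tuple n bool _ (introT eqP (size_decs f e n w)))) //=.
rewrite big1 ?addr0; first by rewrite indicE mem_set // mulr1.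
move=> x nx; rewrite indicE memNset ?mulr0 //= => dx.
by move/negP: nx; apply; apply/eqP/val_inj.
Qed.

Lemma measurable_fun_decs (g : seq bool -> R) n :
  measurable_fun setT (fun w => g (decs f e n w)).
Proof.
rewrite (funext (decs_sum_tuple g n)).
apply: measurable_sum => x; apply: measurable_funM; first exact: measurable_cst.
by apply: measurable_indic; exact: measurable_decs_eq.
Qed.
End measurable_decisions.

Section independent_factor.
Local Open Scope ereal_scope.
Context d (T : measurableType d) (R : realType) (P : probability T R).
Variables (X : T -> R) (A : set T).
Hypotheses (mA : measurable A) (mX : measurable_fun setT X) (X0 : forall w, (0 <= X w)%R).
Hypothesis X_indep_A :
  forall C, measurable C -> P (X @^-1` C `&` A) = P (X @^-1` C) * P A.

Let Y w := (X w * \1_A w)%R.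
Let p := fine (P A).

Let PA : P A = p%:E.
Proof. by rewrite fineK // fin_num_measure. Qed.

Let p_ge0 : (0 <= p)%R.
Proof. by rewrite -lee_fin -PA measure_ge0. Qed.

Let p_le1 : (0 <= 1 - p)%R.
Proof. by rewrite subr_ge0 -lee_fin -PA probability_le1. Qed.

Let mY : measurable_fun setT Y.
Proof. by apply: measurable_funM => //; exact: measurable_indic. Qed.

Lemma law_mul_indic C : measurable C ->
  P (Y @^-1` C) = p%:E * P (X @^-1` C) + (1 - p)%:E * \d_(0%R : R) C.
Proof.
move=> mC; have mYC : measurable (Y @^-1` C) by rewrite -[_ @^-1` _]setTI; exact: mY.
rewrite (measureDI P mYC mA) addeC muleC -PA -X_indep_A //; congr (_ + _).
  by congr (P _); apply/seteqP; split => w /= [Cw Aw]; split;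
    rewrite // /Y indicE mem_set // mulr1 in Cw *.
have -> : Y @^-1` C `\` A = if `[< C 0%R >] then ~` A else set0.
  apply/seteqP; split => w /=; rewrite /Y indicE.
    by move=> [Cw Aw]; rewrite memNset // mulr0 in Cw; rewrite asboolT.
  by case: asboolP => // C0 Aw; split; rewrite // memNset // mulr0.
rewrite diracE; case: asboolP => C0; last by rewrite memNset // measure0 mule0.
rewrite mem_set // mule1; apply: eq_trans (probability_setC P mA) _; by rewrite PA.
Qed.

Lemma integral_mul_indic_indep :
  \int[P]_w (Y w)%:E = P A * \int[P]_w (X w)%:E.
Proof.
(* h agrees with EFin on [0, +oo) and is nonnegative, as the transfer formula
   for pushforward measures requires. *)
pose h (y : R) := (Num.max y 0%R)%:E.
have mh : measurable_fun setT h.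
  by apply/measurable_EFinP; apply: measurable_maxr => //; exact: measurable_cst.
have h0 y : 0 <= h y by rewrite lee_fin le_max lexx orbT.
have hE y : (0 <= y)%R -> h y = y%:E by move=> y0; rewrite /h; congr EFin; exact/max_idPl.
have integral_h (Z : T -> R) (mZ : measurable_fun setT Z) : (forall w, 0 <= Z w)%R ->
    \int[P]_w (Z w)%:E = \int[pushforward P Z]_y h y.
  by move=> Z0; rewrite ge0_integral_pushforward // preimage_setT; apply: eq_integral => w _ /=; rewrite hE.
have Y0 w : (0 <= Y w)%R by rewrite /Y indicE mulr_ge0.
rewrite (integral_h Y) //.
have h0' : forall y, setT y -> 0 <= h y by move=> y _; exact: h0.
pose lawX := measure_function_pushforward__canonical__measure_function_Measure P mX.
pose mix := measure_add (mscale (NngNum p_ge0) lawX) (mscale (NngNum p_le1) \d_(0%R : R)).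
rewrite (eq_measure_integral mix); last first.
  move=> C mC _; apply: eq_trans (law_mul_indic mC) _.
  exact: esym (measure_addE (mscale (NngNum p_ge0) lawX) (mscale (NngNum p_le1) \d_(0%R : R)) C).
rewrite ge0_integral_measure_add // !ge0_integral_mscale //.
rewrite integral_dirac // diracE mem_set // /h /= maxxx mul1e mule0 adde0.
by rewrite PA integral_h.
Qed.
End independent_factor.

Lemma bigcap_mem_cons (I : eqType) (T : Type) (i : I) (s : seq I) (F : I -> set T) :
  \bigcap_(k in [set k | k \in i :: s]) F k = F i `&` \bigcap_(k in [set k | k \in s]) F k.
Proof.
rewrite -bigcap_setU1; apply: eq_bigcapl; split => k /=; rewrite inE.
  by case/orP => [/eqP ->|]; [left|right].
by case=> [->|ks]; rewrite ?eqxx ?ks ?orbT.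
Qed.

Section null_independence.
Local Open Scope ereal_scope.
Context d (T : measurableType d) (R : realType) (P : probability T R).
Variables (e : nat -> T -> R) (theta : nat -> bool).
Hypothesis hind : null_indep P e theta.

Local Notation rect K B := (\bigcap_(k in [set k | k \in K]) e k @^-1` B k).

Lemma null_indep_rect j K (B : nat -> set R) (C : set R) :
  ~~ theta j -> uniq K -> j \notin K -> (forall k, measurable (B k)) -> measurable C ->
  P (e j @^-1` C `&` rect K B) = P (e j @^-1` C) * P (rect K B).
Proof.
move=> null_j uK jK mB mC.
pose K0 := [seq k <- K | ~~ theta k]; pose K1 := [seq k <- K | theta k].
pose B' k := if k == j then C else B k.
have mB' k : measurable (B' k) by rewrite /B'; case: ifP.
have B'E k : k \in K -> B' k = B k.
  by rewrite /B'; case: eqP => // -> jK'; move: jK; rewrite jK'.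
have K0K : {subset K0 <= K} by move=> k; rewrite mem_filter => /andP [].
have K1K : {subset K1 <= K} by move=> k; rewrite mem_filter => /andP [].
have uK0 : uniq K0 by rewrite filter_uniq.
have null_K0 : all (fun k => ~~ theta k) K0 by apply/allP => k; rewrite mem_filter => /andP [].
have nnull_K1 : all theta K1 by apply/allP => k; rewrite mem_filter => /andP [].
have rectK : rect (K0 ++ K1) B = rect K B.
  apply: eq_bigcapl; split => k /=;
    by rewrite mem_cat !mem_filter; case: (theta k); rewrite ?orbF.
have rect'K1 : rect K1 B' = rect K1 B by apply: eq_bigcapr => k /K1K /B'E ->.
have prod'K0 : \prod_(k <- K0) P (e k @^-1` B' k) = \prod_(k <- K0) P (e k @^-1` B k).
  by apply: eq_big_seq => k /K0K /B'E ->.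
have := @hind (j :: K0) K1 B'; rewrite /= mem_filter negb_and jK orbT uK0 null_j null_K0.
move=> /(_ isT isT nnull_K1 mB'); rewrite bigcap_mem_cons big_cons /B' eqxx -/B'.
rewrite (_ : rect (K0 ++ K1) B' = rect K B); last first.
  by rewrite -rectK; apply: eq_bigcapr => k; rewrite /= mem_cat => /orP [/K0K|/K1K] /B'E ->.
by rewrite prod'K0 rect'K1 -muleA -(hind uK0 null_K0 nnull_K1 mB) rectK.
Qed.
End null_independence.

Section fdp_summands.
Variables (R : realType) (T : Type) (f : nat -> seq bool -> R) (e : nat -> T -> R).

Definition rej_denom (s : seq bool) : R := Num.max (count id s)%:R 1.

Definition fdp_summand j (s : seq bool) : R := (nth false s j.-1)%:R / rej_denom s.

Definition oracle_summand j (s : seq bool) : R := f j (take j.-1 s) / rej_denom s.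

Lemma rej_denom_gt0 s : 0 < rej_denom s.
Proof. by rewrite lt_max ltr01 orbT. Qed.

Lemma rej_denom_ge0 s : 0 <= rej_denom s.
Proof. exact: ltW (rej_denom_gt0 s). Qed.

Lemma fdp_summand_ge0 j s : 0 <= fdp_summand j s.
Proof. by rewrite divr_ge0 ?rej_denom_ge0. Qed.

Lemma FDP_decs theta t w :
  FDP f e theta t w = \sum_(1 <= j < t.+1 | ~~ theta j) fdp_summand j (decs f e t w).
Proof.
rewrite /FDP nrej_count mulr_suml big_nat_cond [RHS]big_nat_cond.
by apply: eq_bigr => j /andP [/andP [j0 jt] _]; rewrite /fdp_summand nth_decs // j0 -ltnS.
Qed.

Lemma FDPstar_decs theta t w :
  FDPstar f e theta t w = \sum_(1 <= j < t.+1 | ~~ theta j) oracle_summand j (decs f e t w).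
Proof.
rewrite /FDPstar nrej_count mulr_suml big_nat_cond [RHS]big_nat_cond.
by apply: eq_bigr => j /andP [/andP [j0 jt] _]; rewrite /oracle_summand -alpha_lvl_decs // j0 -ltnS.
Qed.
End fdp_summands.
Arguments rej_denom {R}.
Arguments fdp_summand {R}.

(* Replacing alpha_j and e_j by 1 forces delta_j = 1 whatever the data, so the
   decisions of the forced process are functions of the e_k, k <> j, alone. *)
Definition force_level (R : realType) (j : nat) (f : nat -> seq bool -> R) k s : R :=
  if k == j then 1 else f k s.

Definition force_evalue (T : Type) (R : realType) (j : nat) (e : nat -> T -> R) k w : R :=
  if k == j then 1 else e k w.

Lemma dec_of11 (R : realType) : dec_of (1 : R) 1.
Proof. by rewrite /dec_of ltr01 invr1 lexx. Qed.

Section online_ebh.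
Local Open Scope ereal_scope.
Context d (T : measurableType d) (R : realType) (P : probability T R).
Variables (theta : nat -> bool) (e : nat -> T -> R) (f : nat -> seq bool -> R).
Hypotheses (me : forall k, measurable_fun setT (e k)) (e_ge0 : forall k w, (0 <= e k w)%R).
Hypotheses (hind : null_indep P e theta)
  (e_mean_le1 : forall j, (1 <= j)%N -> ~~ theta j -> \int[P]_w (e j w)%:E <= 1).
Hypothesis hf : levels_ok f.

Let f_ge0 : forall k s, size s = k.-1 -> (0 <= f k s)%R := proj1 hf.
Let f_mono := proj2 hf.

Lemma oracle_summand_ge0 j s : (j.-1 <= size s)%N -> (0 <= oracle_summand f j s)%R.
Proof. by move=> js; rewrite divr_ge0 ?rej_denom_ge0 // f_ge0 // size_takel. Qed.

Section forcing.
Variables (t j : nat).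
Hypotheses (jt : (0 < j <= t)%N) (null_j : ~~ theta j).

Local Notation D := (decs f e t).
Local Notation DF := (decs (force_level j f) (force_evalue j e) t).

Let j_gt0 : (0 < j)%N. Proof. by case/andP: jt. Qed.
Let j1t : (j.-1 <= t)%N.
Proof. by case/andP: jt => _; exact: leq_trans (leq_pred j). Qed.

Lemma forced_decs_ge w : bitwise_le t (D w) (DF w).
Proof.
apply: decs_bitwise_le => k s s' ss ss' ss'_le.
rewrite /force_level /force_evalue; case: eqP => _; first by rewrite dec_of11 implybT.
by apply: dec_of_le; exact: f_mono.
Qed.

Lemma forced_decs_prefix w : take j.-1 (DF w) = take j.-1 (D w).
Proof.
rewrite !take_decs //; symmetry; apply: eq_decs => k /andP [k0 kj].
move: kj; rewrite -ltnS prednK // => /ltn_eqF kj.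
by rewrite /force_level /force_evalue kj.
Qed.

Lemma forced_decs_id w : delta f e j w -> DF w = D w.
Proof.
move=> rej_j; symmetry; apply: eq_decs => k _.
rewrite /force_level /force_evalue; case: eqP => [->|//].
by rewrite dec_of11; move: rej_j; rewrite deltaE //.
Qed.

Lemma nth_forced_decs w : nth false (DF w) j.-1.
Proof.
by rewrite nth_decs // deltaE // /alpha_lvl /force_level /force_evalue eqxx dec_of11.
Qed.

Lemma measurable_force_evalue k : measurable_fun setT (force_evalue j e k).
Proof. by rewrite /force_evalue; case: eqP => _; [exact: measurable_cst|exact: me]. Qed.

Lemma fdp_summand_le_forced w :
  (fdp_summand j (D w) <= e j w * oracle_summand f j (DF w))%R.
Proof.
rewrite /fdp_summand nth_decs //; case rej_j: (delta f e j w); last first.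
  by rewrite mul0r mulr_ge0 // oracle_summand_ge0 // size_decs.
rewrite forced_decs_id // /oracle_summand mulrA ler_wpM2r ?invr_ge0 ?rej_denom_ge0 //.
by rewrite -alpha_lvl_decs // dec_of_mul_ge1 // -deltaE //.
Qed.

Lemma oracle_summand_forced_le w : (oracle_summand f j (DF w) <= oracle_summand f j (D w))%R.
Proof.
rewrite /oracle_summand forced_decs_prefix ler_wpM2l //.
  by rewrite f_ge0 // size_takel ?size_decs.
rewrite lef_pV2 ?posrE ?rej_denom_gt0 // /rej_denom ge_max !le_max lexx ler_nat.
by rewrite (count_bitwise_le _ _ (forced_decs_ge w)) ?size_decs ?orbT.
Qed.

Lemma forced_decs_eq_rect (x : seq bool) : size x = t -> nth false x j.-1 ->
  [set w | DF w = x] = \bigcap_(k in [set k | k \in [seq k <- iota 1 t | k != j]])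
    e k @^-1` [set y | dec_of (f k (take k.-1 x)) y = nth false x k.-1].
Proof.
move=> sx xj; apply/seteqP; split => w /=.
  move/(decs_eqP _ _ w sx) => dx k /=.
  rewrite mem_filter mem_iota add1n ltnS => /andP [kj kt].
  by have := dx k kt; rewrite /force_level /force_evalue (negPf kj).
move=> dx; apply/(decs_eqP _ _ w sx) => k kt; rewrite /force_level /force_evalue.
case: eqP => [->|/eqP kj]; first by rewrite dec_of11.
by apply: (dx k); rewrite /= mem_filter mem_iota add1n ltnS kj.
Qed.

Lemma integral_forced_indic (x : t.-tuple bool) :
  \int[P]_w (e j w * \1_[set w | DF w = x] w)%:E <= P [set w | DF w = x].
Proof.
case: (boolP (nth false x j.-1)) => xj; last first.
  have -> : [set w | DF w = x] = set0.
    by apply/seteqP; split => w //= dx; move: xj; rewrite -dx nth_forced_decs.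
  by rewrite measure0 (eq_integral (fun=> 0)) ?integral0 // => w _; rewrite indicE in_set0 mulr0.
have mB k : measurable [set y | dec_of (f k (take k.-1 x)) y = nth false x k.-1].
  exact: measurable_dec_of.
rewrite forced_decs_eq_rect ?size_tuple // integral_mul_indic_indep //.
- by rewrite -[X in _ <= X]mule1 lee_wpmul2l // e_mean_le1.
- by apply: bigcap_measurableType => k _; rewrite -[_ @^-1` _]setTI; exact: me.
- move=> C mC; apply: (null_indep_rect hind) => //.
  + by rewrite filter_uniq // iota_uniq.
  + by rewrite mem_filter eqxx.
Qed.

Lemma integral_forced_le (g : seq bool -> R) : (forall s, size s = t -> 0 <= g s)%R ->
  \int[P]_w (e j w * g (DF w))%:E <= \int[P]_w (g (DF w))%:E.
Proof.
move=> g_ge0.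
have mDF x : measurable [set w | DF w = x].
  by apply: measurable_decs_eq; exact: measurable_force_evalue.
have mI x : measurable_fun setT (\1_[set w | DF w = x] : T -> R).
  exact: measurable_indic.
under eq_integral => w _.
  rewrite (decs_sum_tuple _ _ g) mulr_sumr -sumEFin.
  under eq_bigr => x _ do rewrite mulrCA EFinM.
  over.
under [X in _ <= X]eq_integral => w _.
  rewrite (decs_sum_tuple _ _ g) -sumEFin.
  under eq_bigr => x _ do rewrite EFinM.
  over.
have g_ge0' (x : t.-tuple bool) : (0 <= g x)%R by rewrite g_ge0 ?size_tuple.
rewrite /= !ge0_integral_sum //.
- apply: lee_sum => x _.
  rewrite !ge0_integralZl_EFin //.
  + by rewrite lee_wpmul2l ?lee_fin // integral_indic // setIT integral_forced_indic.
  + exact/measurable_EFinP.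
  + by move=> w _; rewrite lee_fin mulr_ge0 // indicE.
  + exact/measurable_EFinP/measurable_funM.
- by move=> x; apply/measurable_EFinP/measurable_funM.
- by move=> x w _; rewrite mule_ge0 // lee_fin // indicE.
- by move=> x; apply/measurable_EFinP/measurable_funM => //; exact: measurable_funM.
- by move=> x w _; rewrite mule_ge0 // lee_fin // mulr_ge0 // indicE.
Qed.

Lemma integral_fdp_summand_le :
  \int[P]_w (fdp_summand j (D w))%:E <= \int[P]_w (oracle_summand f j (D w))%:E.
Proof.
have oracle_ge0 s : size s = t -> (0 <= oracle_summand f j s)%R.
  by move=> st; rewrite oracle_summand_ge0 // st.
have mDF g : measurable_fun setT (fun w => g (DF w) : R).
  by apply: measurable_fun_decs; exact: measurable_force_evalue.
have mD g : measurable_fun setT (fun w => g (D w) : R) by exact: measurable_fun_decs.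
apply: (@le_trans _ _ (\int[P]_w (e j w * oracle_summand f j (DF w))%:E)).
  apply: ge0_le_integral => //.
  - by move=> w _; rewrite lee_fin fdp_summand_ge0.
  - exact/measurable_EFinP.
  - by apply/measurable_EFinP/measurable_funM.
  - by move=> w _; rewrite lee_fin fdp_summand_le_forced.
apply: le_trans (integral_forced_le oracle_ge0) _.
apply: ge0_le_integral => //.
- by move=> w _; rewrite lee_fin oracle_ge0 // size_decs.
- exact/measurable_EFinP.
- exact/measurable_EFinP.
- by move=> w _; rewrite lee_fin oracle_summand_forced_le.
Qed.
End forcing.

Lemma integral_FDP_le_FDPstar t :
  \int[P]_w (FDP f e theta t w)%:E <= \int[P]_w (FDPstar f e theta t w)%:E.
Proof.
pose nulls := [seq j <- index_iota 1 t.+1 | ~~ theta j].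
have mem_nulls j : j \in nulls -> (0 < j <= t)%N && ~~ theta j.
  by rewrite mem_filter mem_index_iota ltnS andbC.
pose oracle j w := if (j <= t)%N then oracle_summand f j (decs f e t w) else 0%R.
have FDPstarE w : (FDPstar f e theta t w)%:E = \sum_(j <- nulls) (oracle j w)%:E.
  rewrite FDPstar_decs -big_filter -sumEFin; apply: eq_big_seq => j.
  by move=> /mem_nulls /andP [/andP [_ jt] _]; rewrite /oracle jt.
under eq_integral do rewrite FDP_decs -big_filter -sumEFin.
under [X in _ <= X]eq_integral do rewrite FDPstarE.
rewrite !ge0_integral_sum //.
- rewrite big_seq [X in _ <= X]big_seq; apply: lee_sum => j /mem_nulls /andP [jt null_j].
  by rewrite /oracle; case/andP: (jt) => _ ->; exact: integral_fdp_summand_le.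
- by move=> j; apply/measurable_EFinP; exact: measurable_fun_decs.
- by move=> j w _; rewrite lee_fin fdp_summand_ge0.
- move=> j; apply/measurable_EFinP; rewrite /oracle; case: (j <= t)%N => //.
  exact: measurable_fun_decs.
- move=> j w _; rewrite lee_fin /oracle; case: ifP => // jt.
  by rewrite oracle_summand_ge0 // size_decs (leq_trans (leq_pred j)).
Qed.
End online_ebh.

Unset Implicit Arguments.

Theorem theorem5 (d : measure_display) (T : measurableType d) (R : realType)
  (P : probability T R) (alpha : R) (theta : nat -> bool)
  (e : nat -> T -> R) (f : nat -> seq bool -> R) :
  0 < alpha < 1 ->
  (forall t, measurable_fun setT (e t)) ->
  (forall t w, 0 <= e t w) ->
  valid_evalues P f e theta ->
  null_indep P e theta ->
  (forall j, (1 <= j)%N -> ~~ theta j -> (\int[P]_w (e j w)%:E <= 1)%E) ->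
  levels_ok f ->
  forall t, (1 <= t)%N ->
    (\int[P]_w (FDPstar f e theta t w)%:E <= alpha%:E)%E ->
    (\int[P]_w (FDP f e theta t w)%:E <= alpha%:E)%E.
Proof.
(* Neither the conditional validity of the e-values nor the range of alpha is
   needed: independence and E[e_j] <= 1 suffice. *)
move=> _ me e_ge0 _ hind e_mean_le1 hf t _.
exact: le_trans (integral_FDP_le_FDPstar me e_ge0 hind e_mean_le1 hf t).
Qed.
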